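(* Let $n_1,\dots,n_N\ge1$, $n=\sum_{i=1}^Nn_i$, and $\epsilon_i>0$ for $i=1,\dots,N$. Let $p_c:\mathbb R^n\to\mathbb R$ be the density of the uniform distribution on $\prod_{i=1}^NC_{n_i}(0,\epsilon_i)$, i.e. $p_c(z)=\frac{1}{2^n\prod_{i=1}^N\epsilon_i^{n_i}}$ for $z\in\prod_{i=1}^NC_{n_i}(0,\epsilon_i)$ and $p_c(z)=0$ otherwise. Then for all $x,y\in\mathbb R^n$, $$\int_{\mathbb R^n}|p_c(u-x)-p_c(u-y)|\,du\le\frac{\sqrt n}{\min_{1\le i\le N}\epsilon_i}\|x-y\|.$$
   Context: $C_m(x,\rho)=\{y\in\mathbb R^m:\|y-x\|_\infty\le\rho\}$ is the cube centered at $x$ with edge length $2\rho$ and edges along the coordinate axes; $\|\cdot\|$ is the Euclidean norm. *)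

From HB Require Import structures.
From mathcomp Require Import all_boot all_order all_algebra.
From mathcomp Require Import all_classical all_reals all_analysis.
Set Implicit Arguments. Unset Strict Implicit. Unset Printing Implicit Defensive.
Import Order.TTheory GRing.Theory Num.Theory.
Local Open Scope ring_scope.

Definition dimn (N : nat) (nn : 'I_N -> nat) : nat := (\sum_(i < N) nn i)%N.

(* coordinate j (0-based) of R^n belongs to the i-th block (contiguous blocks
   of sizes nn 0, nn 1, ...) *)
Definition inblk (N : nat) (nn : 'I_N -> nat) (i : 'I_N) (j : 'I_(dimn nn)) : bool :=
  ((\sum_(k < N | (k < i)%N) nn k <= j)%N && (j < \sum_(k < N | (k <= i)%N) nn k)%N).

Definition eucl (R : realType) (n : nat) (x : 'rV[R]_n) : R :=
  Num.sqrt (\sum_(j < n) (x ord0 j) ^+ 2).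

Definition pc (R : realType) (N : nat) (nn : 'I_N -> nat) (eps : 'I_N -> R)
  (z : 'rV[R]_(dimn nn)) : R :=
  if [forall i, forall j, @inblk N nn i j ==> (`|z ord0 j| <= eps i)]
  then (2 ^+ dimn nn * \prod_(i < N) eps i ^+ nn i)^-1
  else 0.

(* Lebesgue integral over R^n of a nonnegative function, as the iterated
   one-dimensional Lebesgue integral (equal to the n-dimensional Lebesgue
   integral for nonnegative measurable integrands by Tonelli). *)
Definition vcons (R : realType) (n : nat) (t : R) (v : 'rV[R]_n) : 'rV[R]_n.+1 :=
  \row_(j < n.+1) (if unlift ord0 j is Some k then v ord0 k else t).

Fixpoint iint (R : realType) (n : nat) : ('rV[R]_n -> \bar R) -> \bar R :=
  match n with
  | 0 => fun f => f 0
  | n'.+1 => fun f =>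
      (\int[@lebesgue_measure R]_t iint (fun v : 'rV[R]_n' => f (vcons t v)))%E
  end.

Definition min_eps (R : realType) (N' : nat) (eps : 'I_N'.+1 -> R) : R :=
  \big[Order.min/eps ord0]_(i < N'.+1) eps i.

From HB Require Import structures.
From mathcomp Require Import all_boot all_order all_algebra.
From mathcomp Require Import all_classical all_reals all_analysis.
From mathcomp Require Import measurable_realfun.
From mathcomp Require Import ring lra zify.
Import Order.TTheory GRing.Theory Num.Theory.
Set Implicit Arguments. Unset Strict Implicit. Unset Printing Implicit Defensive.
Local Open Scope ring_scope.

(* The density is a constant [C] times the indicator of a box, a product of
   one-dimensional interval indicators with half-widths [e_j] (the [eps] of the
   block of coordinate [j]), and [C^-1] is the volume [prod_j (2 e_j)].  For
   boxes with centres [a] and [b], the integral of the difference of the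
   indicators is at most [prod_j (2 e_j) * sum_j |a_j - b_j| / e_j]: split off
   the first coordinate and induct; where both first intervals contain [t] the
   inductive bound applies on a set of length [2 e_0], and their symmetric
   difference has length at most [2 |a_0 - b_0|].  Finally
   [sum_j |a_j - b_j| / e_j <= (sum_j |a_j - b_j|) / min eps], and
   Cauchy-Schwarz bounds the last sum by [sqrt n * ||a - b||]. *)

Section IntervalIndicators.
Variable R : realType.

Definition itv_ind (c r t : R) : R := ((`|t - c| <= r)%R : bool)%:R.

Lemma itv_indE c r :
  itv_ind c r = \1_([set` (`[c - r, c + r] : interval R)]) :> (R -> R).
Proof.
apply/funext => t; rewrite indicE /itv_ind mem_setE in_itv /= ler_norml.
by congr (nat_of_bool _)%:R; apply/andP/andP => -[? ?]; split; lra.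
Qed.

Lemma measurable_itv_ind c r : measurable_fun setT (itv_ind c r).
Proof. by rewrite itv_indE; apply: measurable_indic. Qed.

Lemma itv_ind_ge0 c r t : 0 <= itv_ind c r t.
Proof. by rewrite ler0n. Qed.

Lemma integral_itv_ind c r : 0 <= r ->
  (\int[lebesgue_measure]_t (itv_ind c r t)%:E = (2 * r)%:E)%E.
Proof.
move=> r0; rewrite itv_indE integral_indic //= setIT lebesgue_measure_itv /=.
rewrite lte_fin; case: ifPn => h; last by congr (_%:E); lra.
by rewrite -EFinB; congr (_%:E); ring.
Qed.

Lemma itv_ind_cases c r t :
  (itv_ind c r t = 1 /\ c - r <= t <= c + r) \/
  (itv_ind c r t = 0 /\ (t < c - r \/ c + r < t)).
Proof.
rewrite /itv_ind; case: (lerP `|t - c| r) => h; [left|right]; split => //.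
  by move: h; rewrite ler_norml => /andP[? ?]; apply/andP; split; lra.
by move: h; rewrite ltr_normr => /orP[?|?]; [right|left]; lra.
Qed.

(* The symmetric difference of the intervals of radius [e] around [a] and [b]
   is covered by the two intervals of length [|a - b|] centred at the
   midpoints [(a + b) / 2 -+ e] of the pairs of corresponding endpoints. *)
Lemma itv_ind_dist_le a b e t :
  `|itv_ind a e t - itv_ind b e t| <=
  itv_ind ((a + b) / 2 - e) (`|a - b| / 2) t +
  itv_ind ((a + b) / 2 + e) (`|a - b| / 2) t.
Proof.
case: (lerP a b) => ab;
  repeat match goal with |- context [itv_ind ?c ?r t] =>
    case: (itv_ind_cases c r t) => -[-> ?] end;
  rewrite ?subrr ?subr0 ?sub0r ?normrN ?normr0 ?normr1; lra.
Qed.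

Lemma le_integral_itv_ind_dist a b e :
  (\int[lebesgue_measure]_t (`|itv_ind a e t - itv_ind b e t|)%:E
    <= (2 * `|a - b|)%:E)%E.
Proof.
set d := `|a - b| / 2; set m := (a + b) / 2.
have d0 : 0 <= d by rewrite divr_ge0.
apply: (@le_trans _ _ (\int[lebesgue_measure]_t
  ((itv_ind (m - e) d t)%:E + (itv_ind (m + e) d t)%:E))%E).
  apply: ge0_le_integral => //.
  - apply/measurable_EFinP; apply: measurableT_comp => //.
    by apply: measurable_funB; apply: measurable_itv_ind.
  - by apply: emeasurable_funD; apply/measurable_EFinP; apply: measurable_itv_ind.
  - by move=> t _; rewrite -EFinD lee_fin itv_ind_dist_le.
rewrite ge0_integralD //; first last.
- by apply/measurable_EFinP; apply: measurable_itv_ind.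
- by move=> t _; rewrite lee_fin itv_ind_ge0.
- by apply/measurable_EFinP; apply: measurable_itv_ind.
- by move=> t _; rewrite lee_fin itv_ind_ge0.
by rewrite !integral_itv_ind // -EFinD lee_fin /d; lra.
Qed.

Lemma le_integral_itv_ind_overlap_symdiff a b e (j v : R) : 0 <= e -> 0 <= j -> 0 <= v ->
  (\int[lebesgue_measure]_t (j%:E * (itv_ind a e t * itv_ind b e t)%:E +
                             v%:E * `|itv_ind a e t - itv_ind b e t|%:E)
    <= (j * (2 * e) + v * (2 * `|a - b|))%:E)%E.
Proof.
move=> e0 j0 v0.
have mA := measurable_itv_ind a e; have mB := measurable_itv_ind b e.
have mAB : measurable_fun setT (fun t => itv_ind a e t * itv_ind b e t).
  exact: measurable_funM.
have mD : measurable_fun setT (fun t => `|itv_ind a e t - itv_ind b e t|).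
  by apply: measurableT_comp => //; apply: measurable_funB.
have AB0 t : 0 <= itv_ind a e t * itv_ind b e t by rewrite mulr_ge0 ?itv_ind_ge0.
rewrite ge0_integralD //; first last.
- by apply: measurable_funeM; apply/measurable_EFinP.
- by move=> t _; rewrite mule_ge0.
- by apply: measurable_funeM; apply/measurable_EFinP.
- by move=> t _; rewrite mule_ge0 // lee_fin.
rewrite !ge0_integralZl_EFin //;
  [|exact/measurable_EFinP|by move=> t _; rewrite lee_fin|exact/measurable_EFinP].
rewrite EFinD (EFinM j) (EFinM v); apply: leeD; apply: lee_wpmul2l; rewrite ?lee_fin //.
- rewrite -(integral_itv_ind a) //; apply: ge0_le_integral => //.
  + by move=> t _; rewrite lee_fin.
  + exact/measurable_EFinP.
  + exact/measurable_EFinP.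
  + move=> t _; rewrite lee_fin.
    by case: (itv_ind_cases b e t) => -[-> _]; rewrite ?mulr1 ?mulr0 ?itv_ind_ge0.
- exact: le_integral_itv_ind_dist.
Qed.

End IntervalIndicators.

Definition row_behead (T : Type) n (a : 'rV[T]_n.+1) : 'rV[T]_n :=
  \row_k a ord0 (lift ord0 k).

Section Boxes.
Variable R : realType.

Definition box_ind n (e : 'I_n -> R) (a u : 'rV[R]_n) : R :=
  \prod_(j < n) itv_ind (a ord0 j) (e j) (u ord0 j).

Lemma box_ind_ge0 n (e : 'I_n -> R) a u : 0 <= box_ind e a u.
Proof. by apply: prodr_ge0 => j _; apply: itv_ind_ge0. Qed.

Lemma vcons_ord0 n (t : R) (v : 'rV[R]_n) : vcons t v ord0 ord0 = t.
Proof. by rewrite mxE unlift_none. Qed.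

Lemma vcons_lift n (t : R) (v : 'rV[R]_n) k : vcons t v ord0 (lift ord0 k) = v ord0 k.
Proof. by rewrite mxE liftK. Qed.

Lemma box_ind_vcons n (e : 'I_n.+1 -> R) a t v :
  box_ind e a (vcons t v) = itv_ind (a ord0 ord0) (e ord0) t *
    box_ind (fun k : 'I_n => e (lift ord0 k)) (row_behead a) v.
Proof.
rewrite /box_ind big_ord_recl vcons_ord0; congr (_ * _); apply: eq_bigr => k _.
by rewrite vcons_lift mxE.
Qed.

Lemma iintS n (f : 'rV[R]_n.+1 -> \bar R) :
  iint f = (\int[lebesgue_measure]_t iint (fun v => f (vcons t v)))%E.
Proof. by []. Qed.

Lemma iint_ge0 n (f : 'rV[R]_n -> \bar R) :
  (forall u, (0 <= f u)%E) -> (0 <= iint f)%E.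
Proof.
elim: n f => [|n IH] f f0 /=; first exact: f0.
by apply: integral_ge0 => t _; apply: IH.
Qed.

Lemma iint0 n : iint (fun _ : 'rV[R]_n => 0%E) = 0%E.
Proof. by elim: n => [|n IH] //=; rewrite IH integral0. Qed.

Lemma iint_box_ind n c (e : 'I_n -> R) a : 0 <= c -> (forall j, 0 <= e j) ->
  iint (fun u => (c * box_ind e a u)%:E) = (c * \prod_(j < n) (2 * e j))%:E.
Proof.
elim: n c e a => [|n IH] c e a c0 e0; first by rewrite /= /box_ind !big_ord0.
rewrite iintS; transitivity (\int[lebesgue_measure]_t
    ((c * \prod_(j < n) (2 * e (lift ord0 j)))%:E * (itv_ind (a ord0 ord0) (e ord0) t)%:E))%E.
  apply: eq_integral => t _; under eq_fun do rewrite box_ind_vcons mulrA.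
  by rewrite IH ?mulr_ge0 ?itv_ind_ge0 // -EFinM; congr (_%:E); ring.
rewrite ge0_integralZl_EFin //.
- by rewrite integral_itv_ind // -EFinM big_ord_recl; congr (_%:E); ring.
- by move=> t _; rewrite lee_fin itv_ind_ge0.
- by apply/measurable_EFinP; apply: measurable_itv_ind.
- by rewrite mulr_ge0 // prodr_ge0 // => j _; rewrite mulr_ge0.
Qed.

Lemma iint_dist_box_ind_vcons n c (e : 'I_n.+1 -> R) a b t : 0 <= c ->
  (forall j, 0 <= e j) ->
  iint (fun v => (c * `|box_ind e a (vcons t v) - box_ind e b (vcons t v)|)%:E) =
  (iint (fun v => (c * `|box_ind (fun k : 'I_n => e (lift ord0 k)) (row_behead a) v -
                          box_ind (fun k : 'I_n => e (lift ord0 k)) (row_behead b) v|)%:E) *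
     (itv_ind (a ord0 ord0) (e ord0) t * itv_ind (b ord0 ord0) (e ord0) t)%:E +
   (c * \prod_(j < n) (2 * e (lift ord0 j)))%:E *
     `|itv_ind (a ord0 ord0) (e ord0) t - itv_ind (b ord0 ord0) (e ord0) t|%:E)%E.
Proof.
move=> c0 e0; under eq_fun do rewrite !box_ind_vcons.
rewrite /itv_ind; case: (_ <= _)%R; case: (_ <= _)%R => /=;
  under eq_fun do rewrite ?(mul1r, mul0r, subr0, sub0r, subrr, normrN, normr0, mulr0);
  rewrite ?(mulr1, mulr0, subrr, subr0, sub0r, normrN, normr0, normr1).
- by rewrite mule1 mule0 adde0.
- rewrite mule0 add0e mule1 -(iint_box_ind (row_behead a)) //.
  by congr iint; apply/funext => u; rewrite ger0_norm // box_ind_ge0.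
- rewrite mule0 add0e mule1 -(iint_box_ind (row_behead b)) //.
  by congr iint; apply/funext => u; rewrite ger0_norm // box_ind_ge0.
- by rewrite iint0 mule0 mule0 adde0.
Qed.

Lemma iint_dist_box_ind n c (e : 'I_n -> R) a b : 0 <= c -> (forall j, 0 < e j) ->
  (iint (fun u => (c * `|box_ind e a u - box_ind e b u|)%:E) <=
   (c * \prod_(j < n) (2 * e j) * \sum_(j < n) `|a ord0 j - b ord0 j| / e j)%:E)%E.
Proof.
elim: n c e a b => [|n IH] c e a b c0 e_gt0.
  by rewrite /= /box_ind !big_ord0 subrr normr0 !mulr0.
have e0 j : 0 <= e j by apply: ltW.
set e' := fun k : 'I_n => e (lift ord0 k).
set V := c * \prod_(j < n) (2 * e' j).
set S := V * \sum_(k < n) `|a ord0 (lift ord0 k) - b ord0 (lift ord0 k)| / e' k.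
have V0 : 0 <= V by rewrite mulr_ge0 // prodr_ge0 // => j _; rewrite mulr_ge0 ?e0.
set I := iint (fun v => (c * `|box_ind e' (row_behead a) v - box_ind e' (row_behead b) v|)%:E).
have I_ge0 : (0 <= I)%E by apply: iint_ge0 => v; rewrite lee_fin mulr_ge0.
have I_le : (I <= S%:E)%E.
  apply: le_trans (IH _ _ _ _ c0 (fun k => e_gt0 _)) _.
  by rewrite lee_fin /row_behead; under [X in _ * X <= _]eq_bigr => k _ do rewrite !mxE.
have I_fin : I \is a fin_num by rewrite ge0_fin_numE // (le_lt_trans I_le) ?ltry.
rewrite iintS.
under eq_integral => t _ do rewrite iint_dist_box_ind_vcons // -/e' -/I -(fineK I_fin).
apply: le_trans (le_integral_itv_ind_overlap_symdiff _ _ (e0 _) (fine_ge0 I_ge0) V0) _.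
rewrite lee_fin !big_ord_recl; set d := `|a ord0 ord0 - b ord0 ord0|.
rewrite [leRHS](_ : _ = S * (2 * e ord0) + V * (2 * d)); last first.
  by rewrite /S /V /e'; field; rewrite gt_eqF.
by rewrite lerD2r ler_wpM2r ?mulr_ge0 // -lee_fin fineK.
Qed.

End Boxes.

Section Blocks.
Variables (N' : nat) (nn : 'I_N'.+1 -> nat).

Definition blk_start (m : nat) : nat := (\sum_(k < N'.+1 | (k < m)%N) nn k)%N.

Lemma blk_start0 : blk_start 0 = 0%N.
Proof. by rewrite /blk_start big_pred0. Qed.

Lemma blk_startS m (m_lt : (m < N'.+1)%N) :
  blk_start m.+1 = (blk_start m + nn (Ordinal m_lt))%N.
Proof.
rewrite /blk_start (bigD1 (Ordinal m_lt)) //= addnC; congr addn.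
apply: eq_bigl => k; rewrite ltnS -(inj_eq val_inj) /= [(k < m)%N]ltn_neqAle.
by rewrite andbC.
Qed.

Lemma blk_start_last : blk_start N'.+1 = dimn nn.
Proof. by apply: eq_bigl => k; rewrite ltn_ord. Qed.

Lemma blk_start_homo : {homo blk_start : m m' / (m <= m')%N}.
Proof.
move=> m m' le_mm'; rewrite /blk_start big_mkcond [leqRHS]big_mkcond /=.
by apply: leq_sum => k _; case: ltnP => ?; case: ltnP => //; lia.
Qed.

Definition in_blk (i j : nat) : bool := (blk_start i <= j < blk_start i.+1)%N.

Lemma in_blk_exists j : (j < dimn nn)%N -> exists i : 'I_N'.+1, in_blk i j.
Proof.
rewrite -blk_start_last.
suff : forall m, (m <= N'.+1)%N -> (j < blk_start m)%N -> exists i : 'I_N'.+1, in_blk i j.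
  exact.
elim => [|m IH] le_m lt_j; first by rewrite blk_start0 in lt_j.
case: (ltnP j (blk_start m)) => h; first by apply: IH => //; lia.
by exists (Ordinal le_m); rewrite /in_blk h.
Qed.

Lemma in_blk_uniq i i' j : in_blk i j -> in_blk i' j -> i = i'.
Proof.
move=> /andP[? ?] /andP[? ?].
by case: (ltngtP i i') => // h; have := blk_start_homo h; lia.
Qed.

(* The junk value [ord0] is only taken for [j >= dimn nn]. *)
Definition blk_of (j : nat) : 'I_N'.+1 := odflt ord0 [pick i : 'I_N'.+1 | in_blk i j].

Lemma blk_ofP j : (j < dimn nn)%N -> in_blk (blk_of j) j.
Proof.
move=> lt_j; rewrite /blk_of; case: pickP => [i //|none].
by have [i] := in_blk_exists lt_j; rewrite none.
Qed.

Lemma blk_of_eq (i : 'I_N'.+1) j : in_blk i j -> blk_of j = i.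
Proof.
move=> ij; apply/val_inj/esym/(in_blk_uniq ij)/blk_ofP.
rewrite -blk_start_last; move/andP: ij => [_ /leq_trans]; apply.
exact: blk_start_homo.
Qed.

Lemma prod_blk_of (R : comRingType) (f : 'I_N'.+1 -> R) :
  \prod_(j < dimn nn) f (blk_of j) = \prod_(i < N'.+1) f i ^+ nn i.
Proof.
suff blk_prod m : (m <= N'.+1)%N ->
    \prod_(0 <= j < blk_start m) f (blk_of j) = \prod_(i < N'.+1 | (i < m)%N) f i ^+ nn i.
  rewrite -(big_mkord xpredT (fun j => f (blk_of j))) -blk_start_last blk_prod //.
  by apply: eq_bigl => i; rewrite ltn_ord.
elim: m => [|m IH] le_m; first by rewrite blk_start0 big_geq // big_pred0.
rewrite (blk_startS le_m) (big_cat_nat _ (leq_addr _ _)) //= IH 1?ltnW //.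
rewrite (eq_big_nat _ _ (F2 := fun => f (Ordinal le_m))); last first.
  by move=> j hj; rewrite (@blk_of_eq (Ordinal le_m) j) // /in_blk (blk_startS le_m).
rewrite prodr_const_nat addKn [RHS](bigD1 (Ordinal le_m)) //= mulrC; congr (_ * _).
apply: eq_bigl => k; rewrite ltnS -(inj_eq val_inj) /= [(k < m)%N]ltn_neqAle.
by rewrite andbC.
Qed.

End Blocks.

Lemma pc_box_ind (R : realType) N' (nn : 'I_N'.+1 -> nat) (eps : 'I_N'.+1 -> R) x u :
  pc eps (u - x) = (2 ^+ dimn nn * \prod_(i < N'.+1) eps i ^+ nn i)^-1 *
                   box_ind (fun j : 'I_(dimn nn) => eps (blk_of nn j)) x u.
Proof.
rewrite /pc; case: ifP => [inbox|/negbT].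
  suff -> : box_ind (fun j => eps (blk_of nn j)) x u = 1 by rewrite mulr1.
  apply: big1 => j _; rewrite /itv_ind.
  move/forallP: inbox => /(_ (blk_of nn j)) /forallP /(_ j) /implyP; rewrite !mxE => -> //.
  exact: blk_ofP.
rewrite negb_forall => /existsP[i]; rewrite negb_forall => /existsP[j].
rewrite negb_imply !mxE => /andP[ij out].
by rewrite /box_ind (bigD1 j) //= /itv_ind (blk_of_eq ij) (negbTE out) mul0r mulr0.
Qed.

Lemma min_eps_le (R : realType) N' (eps : 'I_N'.+1 -> R) i : min_eps eps <= eps i.
Proof. by rewrite /min_eps (bigD1 i) //= ge_min lexx. Qed.

Lemma min_eps_gt0 (R : realType) N' (eps : 'I_N'.+1 -> R) :
  (forall i, 0 < eps i) -> 0 < min_eps eps.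
Proof.
by move=> eps_gt0; rewrite /min_eps; elim/big_ind: _ => // a b ? ?; rewrite lt_min; apply/andP.
Qed.

Lemma sum_norm_le_sqrt_sum_sqr (R : rcfType) n (f : 'I_n -> R) :
  \sum_(j < n) `|f j| <= Num.sqrt n%:R * Num.sqrt (\sum_(j < n) f j ^+ 2).
Proof.
set s := \sum_(j < n) `|f j|; set q := \sum_(j < n) f j ^+ 2.
have s0 : 0 <= s by apply: sumr_ge0.
have sq_le : s ^+ 2 <= n%:R * q.
  have -> : s ^+ 2 = \sum_(j < n) \sum_(k < n) `|f j| * `|f k|.
    by rewrite expr2 mulr_suml; apply: eq_bigr => j _; rewrite mulr_sumr.
  have -> : n%:R * q = \sum_(j < n) \sum_(k < n) (f j ^+ 2 + f k ^+ 2) / 2.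
    rewrite (eq_bigr (fun j => (n%:R * f j ^+ 2 + q) / 2)); last first.
      by move=> j _; rewrite -mulr_suml big_split /= sumr_const card_ord mulr_natl.
    rewrite -mulr_suml big_split /= -mulr_sumr sumr_const card_ord mulr_natl.
    by field.
  apply: ler_sum => j _; apply: ler_sum => k _.
  rewrite -[f j ^+ 2]real_normK ?num_real // -[f k ^+ 2]real_normK ?num_real //.
  have := sqr_ge0 (`|f j| - `|f k|); lra.
rewrite -sqrtrM // -(ger0_norm s0) -sqrtr_sqr ler_sqrt //.
by rewrite mulr_ge0 // sumr_ge0 // => j _; apply: sqr_ge0.
Qed.

Theorem lemma8 (R : realType) (N' : nat) (nn : 'I_N'.+1 -> nat)
  (eps : 'I_N'.+1 -> R) (x y : 'rV[R]_(dimn nn)) :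
  (forall i, (0 < nn i)%N) -> (forall i, 0 < eps i) ->
  (iint (fun u => (`| pc eps (u - x) - pc eps (u - y) |)%:E) <=
    ((Num.sqrt (dimn nn)%:R / min_eps eps) * eucl (x - y))%:E)%E.
Proof.
(* Empty blocks would be harmless: they contribute no coordinates. *)
move=> _ eps_gt0.
set e := fun j : 'I_(dimn nn) => eps (blk_of nn j).
set C := 2 ^+ dimn nn * \prod_(i < N'.+1) eps i ^+ nn i.
have C_gt0 : 0 < C by rewrite mulr_gt0 ?exprn_gt0 // prodr_gt0 // => i _; rewrite exprn_gt0.
have C_vol : C^-1 * \prod_(j < dimn nn) (2 * e j) = 1.
  by rewrite big_split /= prodr_const card_ord prod_blk_of mulVf ?gt_eqF.
have C_inv_ge0 : 0 <= C^-1 by rewrite invr_ge0 ltW.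
under eq_fun do rewrite !pc_box_ind -/C -mulrBr normrM (ger0_norm C_inv_ge0).
apply: le_trans (iint_dist_box_ind x y C_inv_ge0 (fun j => eps_gt0 _)) _.
rewrite lee_fin C_vol mul1r.
have m_gt0 := min_eps_gt0 eps_gt0.
apply: (@le_trans _ _ (\sum_(j < dimn nn) `|x ord0 j - y ord0 j| / min_eps eps)).
  apply: ler_sum => j _; apply: ler_wpM2l => //.
  by rewrite lef_pV2 ?posrE ?eps_gt0 ?min_eps_le.
rewrite -mulr_suml mulrAC ler_pM2r ?invr_gt0 //.
rewrite /eucl [X in _ <= _ * Num.sqrt X](eq_bigr (fun j => (x ord0 j - y ord0 j) ^+ 2)).
  exact: sum_norm_le_sqrt_sum_sqr.
by move=> j _; rewrite !mxE.
Qed.
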